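(* Let $E$ be a vector bundle of rank $r$ on a variety $X$ and $k\geq 0$. Then for all $d$, $$s_k(\mathrm{Sym}^d(E))=\sum_{|\lambda|=k}p_\lambda(d)\,c_\lambda(E),$$ where the sum runs over the partitions $\lambda=(\lambda_1,\dots,\lambda_l)$ of $k$, $c_\lambda(E):=c_{\lambda_1}(E)\cdots c_{\lambda_l}(E)$, and each $p_\lambda(d)$ is a polynomial in $d$ (with rational coefficients, independent of $E$ and $X$) of degree $\leq rk$; moreover there exists $\lambda$ with $p_\lambda$ of degree exactly $rk$.
   Context: $s_k$ denotes the $k$-th Segre class, with the convention that the total Segre class is the inverse of the total Chern class: $s(E)=c(E)^{-1}$. *)

From HB Require Import structures.
From mathcomp Require Import all_boot all_order all_algebra.
From mathcomp Require Import mpoly.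
Set Implicit Arguments. Unset Strict Implicit. Unset Printing Implicit Defensive.
Import GRing.Theory.
Local Open Scope ring_scope.

(* Universal (splitting principle) model of a rank r bundle E:
   Chern roots x_1..x_r = 'X_i in {mpoly rat[r]}, so c_i(E) = mesym r i
   (which is 0 for i > r). *)
Definition chernE (r i : nat) : {mpoly rat[r]} := mesym r rat i.

(* Chern roots of Sym^d E: one root  \sum_i m_i x_i  for each multi-index
   m = (m_1..m_r) with |m| = d  (i.e. for each degree-d monomial). *)
Definition symd_index (r d : nat) : {set {ffun 'I_r -> 'I_d.+1}} :=
  [set m : {ffun 'I_r -> 'I_d.+1} | (\sum_(i < r) (m i : nat))%N == d].

Definition symd_root (r d : nat) (m : {ffun 'I_r -> 'I_d.+1}) : {mpoly rat[r]} :=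
  \sum_(i < r) (m i : nat)%:R *: 'X_i.

(* Total Chern class of Sym^d E as a polynomial in a grading variable t:
   c_t(Sym^d E) = prod_roots (1 + y t); c_j(Sym^d E) is its j-th coefficient. *)
Definition chern_symd_t (r d : nat) : {poly {mpoly rat[r]}} :=
  \prod_(m in symd_index r d) (1 + (symd_root m)%:P * 'X).

Definition chern_symd (r d j : nat) : {mpoly rat[r]} := (chern_symd_t r d)`_j.

(* Segre classes: s = c^{-1} degreewise, i.e. s_0 = 1 and
   s_n = - \sum_{j=1}^n c_j s_{n-j}  (for c_0 = 1). *)
Fixpoint segre_seq (R : ringType) (c : nat -> R) (n : nat) : seq R :=
  match n with
  | 0 => [:: 1]
  | n'.+1 => let s := segre_seq c n' in
             rcons s (- \sum_(j < n'.+1) c j.+1 * nth 0 s (n' - j))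
  end.

Definition segre (R : ringType) (c : nat -> R) (k : nat) : R :=
  nth 0 (segre_seq c k) k.

(* Partitions of k, in multiplicity form: a i = number of parts equal to i+1. *)
Definition mpartition (k : nat) := {ffun 'I_k -> 'I_k.+1}.

Definition is_partition (k : nat) (a : mpartition k) : bool :=
  (\sum_(i < k) i.+1 * (a i : nat))%N == k.

Definition parts_le (r k : nat) (a : mpartition k) : bool :=
  [forall i : 'I_k, (r < i.+1)%N ==> ((a i : nat) == 0%N)].

Definition chern_lambda (r k : nat) (a : mpartition k) : {mpoly rat[r]} :=
  \prod_(i < k) chernE r i.+1 ^+ (a i : nat).

(* By the splitting principle, c(Sym^d E) = prod_{|m| = d} (1 + (m . x) t) in the
   Chern roots x of E. Newton's identity expresses k s_k through lower Segre classes
   and the power sums sum_{|m| = d} (m . x)^n, whose coefficients are, by Faulhaber's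
   formula, polynomials in d of degree at most n + r - 1; hence s_k(Sym^d E) is a
   polynomial in d of degree at most rk with coefficients in Q[x]. These coefficients
   are symmetric and homogeneous of degree k, hence combinations of the c_lambda(E).
   At x = (1, 0, ..., 0) every c_lambda with lambda <> (1^k) vanishes, and (-1)^k s_k
   becomes a complete homogeneous polynomial in nonnegative numbers, bounded below by
   (sum_{|m| = d} m_1)^k / k! >= C d^(rk); so p_(1^k) has degree exactly rk. *)

From HB Require Import structures.
From mathcomp Require Import all_boot all_order all_algebra all_fingroup.
From mathcomp Require Import mpoly.
From mathcomp Require Import zify ring lra.
Set Implicit Arguments. Unset Strict Implicit. Unset Printing Implicit Defensive.
Import Order.TTheory GRing.Theory Num.Theory.
Local Open Scope ring_scope.

Definition polyfun (R : comNzRingType) (N : nat) (f : nat -> R) :=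
  exists2 P : {poly R}, (size P <= N.+1)%N & forall d, f d = P.[d%:R].

Section PolyFun.
Variable R : comNzRingType.
Implicit Types (f g : nat -> R) (N M : nat).

Lemma eq_polyfun N f g : f =1 g -> polyfun N f -> polyfun N g.
Proof. by move=> fg [P sP fP]; exists P => // d; rewrite -fg. Qed.

Lemma polyfun_widen N M f : (N <= M)%N -> polyfun N f -> polyfun M f.
Proof. by move=> NM [P sP fP]; exists P => //; apply: leq_trans sP _. Qed.

Lemma polyfun_cst (c : R) : polyfun 0 (fun=> c).
Proof. by exists c%:P => [|d]; rewrite ?size_polyC_leq1 ?hornerC. Qed.

Lemma polyfun_id : polyfun 1 (fun d => d%:R : R).
Proof. by exists 'X => [|d]; rewrite ?size_polyX ?hornerX. Qed.

Lemma polyfun_add N f g :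
  polyfun N f -> polyfun N g -> polyfun N (fun d => f d + g d).
Proof.
move=> [P sP fP] [Q sQ gQ]; exists (P + Q) => [|d]; last by rewrite hornerD fP gQ.
by rewrite (leq_trans (size_polyD _ _)) // geq_max sP sQ.
Qed.

Lemma polyfun_opp N f : polyfun N f -> polyfun N (fun d => - f d).
Proof. by move=> [P sP fP]; exists (- P) => [|d]; rewrite ?size_polyN ?hornerN ?fP. Qed.

Lemma polyfun_mul N M f g :
  polyfun N f -> polyfun M g -> polyfun (N + M) (fun d => f d * g d).
Proof.
move=> [P sP fP] [Q sQ gQ]; exists (P * Q) => [|d]; last by rewrite hornerM fP gQ.
by apply: leq_trans (size_polyMleq _ _) _; have := leq_add sP sQ; lia.
Qed.

Lemma polyfun_mull N (c : R) f : polyfun N f -> polyfun N (fun d => c * f d).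
Proof. exact: polyfun_mul (polyfun_cst c). Qed.

Lemma polyfun_exp N f e : polyfun N f -> polyfun (N * e) (fun d => f d ^+ e).
Proof.
move=> pf; elim: e => [|e IH].
  by rewrite muln0; apply: eq_polyfun (polyfun_cst 1) => d; rewrite expr0.
by rewrite mulnS; apply: eq_polyfun (polyfun_mul pf IH) => d; rewrite exprS.
Qed.

Lemma polyfun_sum N (I : Type) (s : seq I) (P : pred I) (F : I -> nat -> R) :
  (forall i, polyfun N (F i)) -> polyfun N (fun d => \sum_(i <- s | P i) F i d).
Proof.
move=> pF; elim: s => [|x s IH].
  by apply: polyfun_widen (eq_polyfun _ (polyfun_cst 0)) => // d; rewrite big_nil.
case Px: (P x); last by apply: eq_polyfun IH => d; rewrite big_cons Px.
by apply: eq_polyfun (polyfun_add (pF x) IH) => d; rewrite big_cons Px.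
Qed.

Lemma polyfun_scaler (F : fieldType) (A : comAlgType F) N (f : nat -> F) (v : A) :
  polyfun N f -> polyfun N (fun d => f d *: v).
Proof.
move=> [P sP fP]; exists (map_poly (in_alg A) P * v%:P) => [|d].
  apply: leq_trans (size_polyMleq _ _) _; rewrite size_map_poly -subn1.
  by rewrite (leq_trans (leq_sub2r 1 (leq_add sP (size_polyC_leq1 v)))) ?addnK.
by rewrite hornerM hornerC -(rmorph_nat (in_alg A)) horner_map /= -fP mulr_algl.
Qed.

End PolyFun.

Lemma sum_ord_rev (V : nmodType) (F : nat -> V) d :
  \sum_(j < d.+1) F (d - j)%N = \sum_(j < d.+1) F j.
Proof. by rewrite [RHS](reindex_inj rev_ord_inj). Qed.

Section SumsOfPowers.
Variable F : numFieldType.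

Lemma sum_powers_binomial i d :
  (d.+1%:R : F) ^+ i.+1 = \sum_(l < i.+1) (\sum_(j < d.+1) (j%:R : F) ^+ l) *+ 'C(i.+1, l).
Proof.
have := @telescope_sumr F 0 d.+1 (fun j => (j%:R : F) ^+ i.+1) (leq0n _).
rewrite expr0n /= subr0 => <-; rewrite big_mkord /=.
under eq_bigr => j _ do
  rewrite -natr1 exprD1n big_ord_recr /= binn mulr1n -addrA subrr addr0.
by rewrite exchange_big /=; apply: eq_bigr => l _; rewrite -sumrMnl.
Qed.

Lemma polyfun_sum_powers i : polyfun i.+1 (fun d => \sum_(j < d.+1) (j%:R : F) ^+ i).
Proof.
elim/ltn_ind: i => i IH.
pose S l d := \sum_(j < d.+1) (j%:R : F) ^+ l.
have SiE d : S i d = i.+1%:R^-1 * ((d%:R + 1) ^+ i.+1 - \sum_(l < i) S l d *+ 'C(i.+1, l)).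
  rewrite natr1 sum_powers_binomial big_ord_recr /= binSn addrAC subrr add0r.
  by rewrite -(mulr_natl (\sum_(j < d.+1) (j%:R : F) ^+ i)) mulKf ?pnatr_eq0.
apply: eq_polyfun (fun d => esym (SiE d)) _; apply/polyfun_mull/polyfun_add.
  have pD1 := polyfun_add (@polyfun_id F) (polyfun_widen (leq0n 1) (polyfun_cst 1)).
  by have := polyfun_exp i.+1 pD1; rewrite mul1n.
apply/polyfun_opp/polyfun_sum => l.
have pC := polyfun_mul (IH l (ltn_ord l)) (polyfun_cst ('C(i.+1, l))%:R).
apply: polyfun_widen (eq_polyfun _ pC); first by rewrite addn0 ltnS ltnW.
by move=> d; rewrite mulr_natr.
Qed.

Lemma polyfun_partial_sum N (f : nat -> F) :
  polyfun N f -> polyfun N.+1 (fun d => \sum_(j < d.+1) f j).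
Proof.
move=> [P sP fP].
have sumE d : \sum_(j < d.+1) f j = \sum_(l < N.+1) P`_l * \sum_(j < d.+1) (j%:R : F) ^+ l.
  under eq_bigr => j _ do rewrite fP (horner_coef_wide _ sP).
  by rewrite exchange_big /=; apply: eq_bigr => l _; rewrite mulr_sumr.
apply: eq_polyfun (fun d => esym (sumE d)) _; apply: polyfun_sum => l.
by apply/polyfun_mull/(polyfun_widen (ltn_ord l)); apply: polyfun_sum_powers.
Qed.

Lemma polyfun_convolution N b (f : nat -> F) : polyfun N f ->
  polyfun (N + b + 1) (fun d => \sum_(j < d.+1) f (d - j)%N * j%:R ^+ b).
Proof.
move=> pf.
have convE d : \sum_(j < d.+1) f (d - j)%N * j%:R ^+ b = \sum_(i < b.+1) d%:R ^+ i *
    \sum_(j < d.+1) (f j * (- (j%:R : F)) ^+ (b - i) *+ 'C(b, i)).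
  transitivity (\sum_(j < d.+1) f j * (d - j)%N%:R ^+ b).
    rewrite -(sum_ord_rev (fun j => f j * (d - j)%N%:R ^+ b)).
    by apply: eq_bigr => j _; rewrite subKn // -ltnS.
  under eq_bigr => j _ do
    rewrite (natrB _ (ltn_ord j : (j <= d)%N)) addrC exprDn mulr_sumr.
  rewrite exchange_big /=; apply: eq_bigr => i _; rewrite mulr_sumr.
  by apply: eq_bigr => j _; rewrite -!mulrnAr; ring.
apply: eq_polyfun (fun d => esym (convE d)) _; apply: polyfun_sum => i.
have ib : (i <= b)%N by rewrite -ltnS.
have pX := polyfun_exp i (@polyfun_id F).
have pNX := polyfun_exp (b - i) (polyfun_opp (@polyfun_id F)).
have pS := polyfun_partial_sum (polyfun_mul pf (polyfun_mul pNX (polyfun_cst ('C(b, i))%:R))).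
apply: polyfun_widen (eq_polyfun _ (polyfun_mul pX pS)); first lia.
by move=> d /=; congr (_ * _); apply: eq_bigr => j _; rewrite mulr_natr mulrnAr.
Qed.

End SumsOfPowers.

Definition eq_upto (R : comNzRingType) n (p q : {poly R}) :=
  forall i, (i <= n)%N -> p`_i = q`_i.

Lemma eq_upto_refl {R : comNzRingType} {n} {p : {poly R}} : eq_upto n p p.
Proof. by []. Qed.

Section EqUpto.
Variable R : comNzRingType.
Implicit Types p q : {poly R}.

Lemma eq_upto_sym n p q : eq_upto n p q -> eq_upto n q p.
Proof. by move=> pq i le_in; rewrite pq. Qed.

Lemma eq_upto_trans n p q s : eq_upto n p q -> eq_upto n q s -> eq_upto n p s.
Proof. by move=> pq qs i le_in; rewrite pq ?qs. Qed.

Lemma eq_uptoD n p p' q q' :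
  eq_upto n p p' -> eq_upto n q q' -> eq_upto n (p + q) (p' + q').
Proof. by move=> pp qq i le_in; rewrite !coefD pp ?qq. Qed.

Lemma eq_uptoM n p p' q q' :
  eq_upto n p p' -> eq_upto n q q' -> eq_upto n (p * q) (p' * q').
Proof.
move=> pp qq i le_in; rewrite !coefM; apply: eq_bigr => j _.
rewrite pp ?qq //; first exact: leq_trans (leq_subr _ _) le_in.
by apply: leq_trans le_in; rewrite -ltnS.
Qed.

Lemma eq_upto_prod n r (F G : 'I_r -> {poly R}) : (forall i, eq_upto n (F i) (G i)) ->
  eq_upto n (\prod_(i < r) F i) (\prod_(i < r) G i).
Proof.
elim: r F G => [|r IH] F G FG; first by rewrite !big_ord0.
by rewrite !big_ord_recr /=; apply: eq_uptoM => //; apply: IH.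
Qed.

End EqUpto.

Section MultiConvolution.
Variable R : comNzRingType.
Implicit Types w : nat -> nat -> R.

Definition multiconv r w d : R :=
  (\prod_(i < r) \poly_(j < d.+1) w i j)`_d.

Lemma multiconv_wide r w e D : (e <= D)%N ->
  (\prod_(i < r) \poly_(j < D.+1) w i j)`_e = multiconv r w e.
Proof.
move=> le_eD; apply: eq_upto_prod (leqnn e) => i l le_le.
by rewrite !coef_poly !ltnS le_le (leq_trans le_le le_eD).
Qed.

Lemma multiconv1 w d : multiconv 1 w d = w 0%N d.
Proof. by rewrite /multiconv big_ord1 coef_poly ltnSn. Qed.

Lemma multiconvS r w d :
  multiconv r.+1 w d = \sum_(j < d.+1) multiconv r w (d - j) * w r j.
Proof.
rewrite /multiconv big_ord_recr /= mulrC coefM; apply: eq_bigr => j _.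
by rewrite mulrC multiconv_wide ?leq_subr // coef_poly ltn_ord.
Qed.

Lemma multiconvE r w d :
  \sum_(m in symd_index r d) \prod_(i < r) w i (m i) = multiconv r w d.
Proof.
rewrite /multiconv; have -> : \prod_(i < r) \poly_(j < d.+1) w i j =
          \prod_(i < r) \sum_(j < d.+1) (w i j)%:P * 'X^j.
  by apply: eq_bigr => i _; rewrite poly_def; apply: eq_bigr => j _; rewrite mul_polyC.
rewrite bigA_distr_bigA /= coef_sum [RHS](bigID (mem (symd_index r d))) /=.
rewrite [X in _ = _ + X]big1 ?addr0.
  apply: eq_bigr => m; rewrite inE => /eqP sum_m.
  by rewrite big_split /= -rmorph_prod coefCM prodrXr coefXn sum_m eqxx mulr1.
move=> m; rewrite inE => /negbTE sum_m.
by rewrite big_split /= -rmorph_prod coefCM prodrXr coefXn eq_sym sum_m mulr0.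
Qed.

End MultiConvolution.

Lemma polyfun_multiconv_powers (F : numFieldType) r (e : nat -> nat) :
  polyfun (\sum_(i < r.+1) e i + r) (multiconv r.+1 (fun i j => (j%:R : F) ^+ e i)).
Proof.
elim: r => [|r IH].
  rewrite big_ord1 addn0; have := polyfun_exp (e 0%N) (@polyfun_id F).
  by rewrite mul1n; apply: eq_polyfun => d; rewrite multiconv1.
apply: polyfun_widen (eq_polyfun _ (polyfun_convolution (e r.+1) IH)).
  by rewrite [X in (_ <= X + _)%N]big_ord_recr /=; lia.
by move=> d; rewrite multiconvS.
Qed.

Lemma sum_card_fibres n k (f : 'I_n -> 'I_k) :
  (\sum_(i < k) #|[pred l | f l == i]|)%N = n.
Proof.
rewrite -[RHS]card_ord -sum1_card (partition_big f xpredT) //=.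
by apply: eq_bigr => i _; rewrite -sum1_card.
Qed.

Lemma prod_fibres (R : comNzRingType) n k (f : 'I_n -> 'I_k) (G : 'I_k -> R) :
  \prod_(l < n) G (f l) = \prod_(i < k) G i ^+ #|[pred l | f l == i]|.
Proof.
rewrite (partition_big f xpredT) //=; apply: eq_bigr => i _.
by rewrite -prodr_const; apply: eq_bigr => l /eqP ->.
Qed.

Definition symd_psum r d n : {mpoly rat[r]} :=
  \sum_(m in symd_index r d) symd_root m ^+ n.

Lemma symd_psumE r d n : symd_psum r.+1 d n =
  \sum_(f : {ffun 'I_n -> 'I_r.+1}) multiconv r.+1
     (fun i j => (j%:R : rat) ^+ #|[pred l | f l == inord i]|) d *: \prod_(l < n) 'X_(f l).
Proof.
rewrite /symd_psum.
under eq_bigr => m _ do rewrite -[n in _ ^+ n]card_ord -prodr_const /symd_root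
  bigA_distr_bigA /= (eq_bigr _ (fun f _ => scaler_prod _ _ _ _)).
rewrite exchange_big /=; apply: eq_bigr => f _; rewrite -scaler_suml -multiconvE.
congr (_ *: _); apply: eq_bigr => m _.
by rewrite (prod_fibres f (fun i => (m i)%:R)); apply: eq_bigr => i _; rewrite inord_val.
Qed.

Lemma polyfun_symd_psum r n : polyfun (n + r) (fun d => symd_psum r.+1 d n).
Proof.
apply: eq_polyfun (fun d => esym (symd_psumE r d n)) _.
apply: polyfun_sum => f; apply: polyfun_scaler.
apply: polyfun_widen
  (@polyfun_multiconv_powers rat r (fun i => #|[pred l | f l == inord i]|)).
rewrite leq_add2r -[X in (_ <= X)%N](sum_card_fibres f).
by apply/eq_leq/eq_bigr => i _; rewrite inord_val.
Qed.

Section Segre.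
Variable R : nzRingType.
Implicit Type c : nat -> R.

Lemma size_segre_seq c n : size (segre_seq c n) = n.+1.
Proof. by elim: n => //= n IH; rewrite size_rcons IH. Qed.

Lemma nth_segre_seq c n i : (i <= n)%N -> nth 0 (segre_seq c n) i = segre c i.
Proof.
elim: n => [|n IH]; first by rewrite leqn0 => /eqP ->.
rewrite leq_eqVlt => /orP [/eqP -> //|lt_in].
by rewrite /= nth_rcons size_segre_seq lt_in IH.
Qed.

Lemma segre0 c : segre c 0 = 1.
Proof. by []. Qed.

Lemma segreS c n : segre c n.+1 = - \sum_(j < n.+1) c j.+1 * segre c (n - j).
Proof.
rewrite {1}/segre /= nth_rcons size_segre_seq ltnn eqxx; congr (- _).
by apply: eq_bigr => j _; rewrite nth_segre_seq // leq_subr.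
Qed.

Lemma eq_segre c c' : c =1 c' -> segre c =1 segre c'.
Proof.
move=> cc' n; elim/ltn_ind: n => -[|n] IH //.
rewrite !segreS; congr (- _); apply: eq_bigr => j _.
by rewrite cc' IH // ltnS leq_subr.
Qed.

End Segre.

Lemma rmorph_segre (R S : nzRingType) (f : {rmorphism R -> S}) (c : nat -> R) n :
  f (segre c n) = segre (f \o c) n.
Proof.
elim/ltn_ind: n => -[|n] IH; first by rewrite !segre0 rmorph1.
rewrite !segreS rmorphN rmorph_sum; congr (- _); apply: eq_bigr => j _.
by rewrite rmorphM IH // ltnS leq_subr.
Qed.

Section SeriesInverse.
Variables (A : comNzRingType) (K : nat).
Implicit Types C P S : {poly A}.

Lemma segre_series C : C`_0 = 1 ->
  eq_upto K (C * \poly_(i < K.+1) segre (fun j => C`_j) i) 1.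
Proof.
move=> C0 [|i] le_iK; rewrite coefM coef1.
  by rewrite big_ord1 coef_poly /= C0 mul1r.
rewrite big_ord_recl /= C0 mul1r coef_poly ltnS le_iK segreS addrC.
apply/eqP; rewrite subr_eq0; apply/eqP/eq_bigr => j _.
by rewrite coef_poly /bump /= subSS ltnS (leq_trans (leq_subr _ _) (ltnW le_iK)).
Qed.

Lemma eq_upto_log_deriv_inv C S P : eq_upto K (C * S) 1 ->
  eq_upto K ('X * C^`()) (C * P) -> eq_upto K (P * S + 'X * S^`()) 0.
Proof.
move=> CS CP.
have dCS : eq_upto K ('X * (C * S)^`()) 0.
  move=> [|i] le_iK; rewrite coefXM coef0 //=.
  by rewrite coef_deriv CS // coef1 mul0rn.
have sum0 : eq_upto K ('X * C^`() * S * S + C * S * ('X * S^`())) 0.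
  have -> : 'X * C^`() * S * S + C * S * ('X * S^`()) = 'X * (C * S)^`() * S.
    by rewrite derivM; ring.
  by rewrite -(mul0r S); apply: eq_uptoM.
apply: eq_upto_trans sum0; apply: eq_uptoD; last first.
  rewrite -{1}(mul1r ('X * S^`())); exact: eq_uptoM (eq_upto_sym CS) eq_upto_refl.
apply: (@eq_upto_trans _ _ _ (C * S * (P * S))).
  rewrite -{1}(mul1r (P * S)); exact: eq_uptoM (eq_upto_sym CS) eq_upto_refl.
rewrite mulrACA -[X in eq_upto _ _ X]mulrA.
exact: eq_uptoM (eq_upto_sym CP) eq_upto_refl.
Qed.

End SeriesInverse.

Section Newton.
Variables (A : comNzRingType) (K : nat).

(* truncation of [t (log (1 + y t))' = y t / (1 + y t)] *)
Definition log_deriv_series (y : A) : {poly A} :=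
  \poly_(n < K.+1) (if n is 0 then 0 else (-1) ^+ n.-1 * y ^+ n).

Lemma log_deriv_seriesP y :
  eq_upto K ((1 + y%:P * 'X) * log_deriv_series y) (y%:P * 'X).
Proof.
move=> l le_lK; rewrite mulrDl mul1r -mulrA coefD coefCM coefXM coefCM coefX.
rewrite /log_deriv_series !coef_poly ltnS le_lK.
case: l le_lK => [|[|n]] le_lK /=; first by rewrite !mulr0 addr0.
  by rewrite expr0 mul1r expr1 mulr1 mulr0 addr0.
by rewrite ifT 1?ltnW // mulr0 !exprS; ring.
Qed.

Variables (I : Type) (y : I -> A).

Definition chern_poly (s : seq I) : {poly A} := \prod_(i <- s) (1 + (y i)%:P * 'X).

Lemma chern_poly_coef0 s : (chern_poly s)`_0 = 1.
Proof.
elim: s => [|x s IH]; first by rewrite /chern_poly big_nil coef1.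
rewrite /chern_poly big_cons coef0M -/(chern_poly s) IH mulr1.
by rewrite coefD coef1 coefCM coefX mulr0 addr0.
Qed.

Lemma chern_poly_log_deriv s : eq_upto K ('X * (chern_poly s)^`())
  (chern_poly s * \sum_(i <- s) log_deriv_series (y i)).
Proof.
elim: s => [|x s IH].
  by rewrite /chern_poly !big_nil -polyC1 derivC mulr0 mul1r.
rewrite /chern_poly !big_cons -/(chern_poly s); set C := chern_poly s.
set L := 1 + (y x)%:P * 'X; set P := \sum_(i <- s) _.
have dL : L^`() = (y x)%:P.
  by rewrite derivD -polyC1 derivC add0r derivM derivC derivX mul0r add0r mulr1.
have -> : 'X * (L * C)^`() = (y x)%:P * 'X * C + L * ('X * C^`()).
  by rewrite derivM dL; ring.
have -> : L * C * (log_deriv_series (y x) + P) =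
  L * log_deriv_series (y x) * C + L * (C * P) by ring.
apply: eq_uptoD; last exact: eq_uptoM eq_upto_refl IH.
exact: eq_uptoM (eq_upto_sym (log_deriv_seriesP _)) eq_upto_refl.
Qed.

Lemma newton_segre s (c := fun j => (chern_poly s)`_j) :
  K%:R * segre c K =
  - \sum_(j < K) (-1) ^+ j * (\sum_(i <- s) y i ^+ j.+1) * segre c (K - j.+1).
Proof.
set P := \sum_(i <- s) log_deriv_series (y i).
have := eq_upto_log_deriv_inv (segre_series (chern_poly_coef0 s))
  (chern_poly_log_deriv s) (leqnn K).
rewrite coefD coef0 coefXM coefM big_ord_recl.
have -> : P`_0 = 0 by rewrite /P coef_sum big1 // => i _; rewrite coef_poly.
rewrite mul0r add0r; case: eqP => [->|/eqP K_neq0].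
  by move=> _; rewrite mul0r big_ord0 oppr0.
rewrite coef_deriv prednK ?lt0n // coef_poly ltnSn => /eqP.
rewrite addrC addr_eq0 => /eqP SK; rewrite mulr_natl SK; congr (- _).
apply: eq_bigr => j _.
rewrite coef_poly ltnS leq_subr /bump /=; congr (_ * _).
rewrite /P coef_sum mulr_sumr; apply: eq_bigr => i _.
by rewrite coef_poly ltnS (ltn_ord j).
Qed.

End Newton.

Lemma chern_symdE r d j :
  chern_symd r d j = (chern_poly (@symd_root r d) (enum (symd_index r d)))`_j.
Proof. by rewrite /chern_symd /chern_symd_t /chern_poly big_enum. Qed.

Lemma newton_segre_symd r d k : k%:R * segre (chern_symd r d) k =
  - \sum_(j < k) (-1) ^+ j * symd_psum r d j.+1 * segre (chern_symd r d) (k - j.+1).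
Proof.
rewrite (eq_segre (chern_symdE r d)) newton_segre; congr (- _).
by apply: eq_bigr => j _; rewrite /symd_psum big_enum (eq_segre (chern_symdE r d)).
Qed.

Lemma polyfun_segre_symd r k :
  polyfun (r.+1 * k) (fun d => segre (chern_symd r.+1 d) k).
Proof.
elim/ltn_ind: k => -[|k] IH.
  by rewrite muln0; apply: eq_polyfun (polyfun_cst 1) => d; rewrite segre0.
pose c : {mpoly rat[r.+1]} := (k.+1%:R^-1 : rat)%:A.
have segreE d : segre (chern_symd r.+1 d) k.+1 =
    c * (k.+1%:R * segre (chern_symd r.+1 d) k.+1).
  rewrite -[k.+1%:R]scaler_nat mulrA mulr_algl scalerA mulVf ?pnatr_eq0 //.
  by rewrite scale1r mul1r.
apply: eq_polyfun (fun d => esym (segreE d)) _; apply: polyfun_mull.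
apply: eq_polyfun (fun d => esym (newton_segre_symd r.+1 d k.+1)) _.
apply/polyfun_opp/polyfun_sum => j.
have lt_jk : (j < k.+1)%N := ltn_ord j.
apply: polyfun_widen (polyfun_mul (polyfun_mull ((-1) ^+ j) (polyfun_symd_psum r j.+1))
  (IH (k.+1 - j.+1)%N _)); last by rewrite subSS ltnS leq_subr.
by rewrite subSS mulnBr; have := leq_mul (leqnn r.+1) lt_jk; nia.
Qed.

Section Homogeneity.
Variables (n : nat) (R : comNzRingType).
Notation A := {mpoly R[n]}.

Lemma chern_poly_homog (I : Type) (y : I -> A) (s : seq I) :
  (forall i, y i \is 1.-homog) -> forall j, (chern_poly y s)`_j \is j.-homog.
Proof.
move=> y_homog; elim: s => [|x s IH] j.
  by rewrite /chern_poly big_nil coef1; case: j => [|j]; rewrite ?dhomog1 ?dhomog0.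
rewrite /chern_poly big_cons -/(chern_poly y s) mulrDl mul1r -mulrA coefD coefCM coefXM.
case: j => [|j] /=; first by rewrite mulr0 addr0 IH.
by rewrite rpredD // -add1n dhomogM.
Qed.

Lemma segre_homog (c : nat -> A) :
  (forall j, c j \is j.-homog) -> forall k, segre c k \is k.-homog.
Proof.
move=> c_homog k; elim/ltn_ind: k => -[|k] IH; first by rewrite segre0 dhomog1.
rewrite segreS rpredN; apply: rpred_sum => j _.
have e : (j.+1 + (k - j))%N = k.+1 by rewrite addSn subnKC // -ltnS.
by have := dhomogM (c_homog j.+1) (IH (k - j)%N _); rewrite e; apply; rewrite ltnS leq_subr.
Qed.

End Homogeneity.

Lemma symd_root_homog r d (m : {ffun 'I_r -> 'I_d.+1}) : symd_root m \is 1.-homog.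
Proof.
by apply: rpred_sum => i _; apply: rpredZ; rewrite dhomogX; apply/eqP/mdeg1.
Qed.

Lemma segre_symd_homog r d k : segre (chern_symd r d) k \is k.-homog.
Proof.
apply: segre_homog => j; rewrite chern_symdE.
exact/chern_poly_homog/symd_root_homog.
Qed.

Section Symmetry.
Variables (r : nat) (s : 'S_r).

Lemma msym_symd_root d (m : {ffun 'I_r -> 'I_d.+1}) :
  msym s (symd_root m) = symd_root [ffun i => m ((s^-1)%g i)].
Proof.
rewrite /symd_root raddf_sum /=.
under eq_bigr => i _ do rewrite msymZ /msym mmapX mmap1U.
rewrite [RHS](reindex_inj (@perm_inj _ s)) /=; apply: eq_bigr => i _.
by rewrite ffunE permK.
Qed.

Lemma msym_chern_symd d j : msym s (chern_symd r d j) = chern_symd r d j.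
Proof.
rewrite /chern_symd -coef_map /chern_symd_t rmorph_prod /=.
apply: (congr1 (fun p : {poly {mpoly rat[r]}} => p`_j)).
pose sm (m : {ffun 'I_r -> 'I_d.+1}) := [ffun i => m ((s^-1)%g i)].
have sm_inj : injective sm.
  move=> m1 m2 /(congr1 (fun m : {ffun 'I_r -> 'I_d.+1} => m (s _))) e.
  by apply/ffunP => i; have := e i; rewrite !ffunE permK.
rewrite [RHS](reindex_inj sm_inj) /=; apply: eq_big => m.
  rewrite !inE; congr (_ == _).
  by rewrite [RHS](reindex_inj (@perm_inj _ s)); apply: eq_bigr => i _; rewrite ffunE permK.
move=> _; rewrite rmorphD rmorph1 rmorphM /= map_polyC map_polyX /=.
by rewrite msym_symd_root.
Qed.

Lemma msym_segre_symd d k :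
  msym s (segre (chern_symd r d) k) = segre (chern_symd r d) k.
Proof. by rewrite rmorph_segre; apply: eq_segre => j /=; rewrite msym_chern_symd. Qed.

End Symmetry.

Lemma natr_mpoly_inj r : injective (fun i : nat => i%:R : {mpoly rat[r]}).
Proof.
move=> i j /(congr1 (mcoeff 0%MM)) /eqP.
by rewrite !mcoeffMn mcoeff1 eqxx eqr_nat => /eqP.
Qed.

Section PolyOnNaturals.
Variable A : idomainType.
Hypothesis natrA_inj : injective (fun i : nat => i%:R : A).

Lemma poly_nat_roots_eq0 (Q : {poly A}) : (forall d, Q.[d%:R] = 0) -> Q = 0.
Proof.
move=> Q_nat0; apply/eqP/negPn/negP => Q_neq0.
have roots : all (root Q) [seq i%:R | i <- iota 0 (size Q)].
  by apply/allP => x /mapP [i _ ->]; rewrite /root Q_nat0.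
have uniq_roots : uniq [seq (i%:R : A) | i <- iota 0 (size Q)].
  by rewrite map_inj_uniq ?iota_uniq.
by have := max_poly_roots Q_neq0 roots uniq_roots; rewrite size_map size_iota ltnn.
Qed.

Lemma horner_map_additive_nat (f : {additive A -> A}) (P : {poly A}) d :
  (map_poly f P).[d%:R] = f P.[d%:R].
Proof.
rewrite (horner_coef_wide _ (size_poly _ _)) (horner_coef_wide _ (leqnn (size P))).
rewrite raddf_sum; apply: eq_bigr => i _.
by rewrite coef_map -natrX !mulr_natr raddfMn.
Qed.

Lemma coef_fixed_additive (f : {additive A -> A}) (P : {poly A}) :
  (forall d, f P.[d%:R] = P.[d%:R]) -> forall j, f P`_j = P`_j.
Proof.
move=> f_fix; have : map_poly f P - P = 0.
  apply: poly_nat_roots_eq0 => d.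
  by rewrite hornerD hornerN horner_map_additive_nat f_fix subrr.
by move/eqP; rewrite subr_eq0 => /eqP fP j; rewrite -coef_map fP.
Qed.

End PolyOnNaturals.

Lemma big_ord_widen_idx (R : Type) (idx : R) (op : Monoid.com_law idx)
    (F : nat -> R) n m :
  (n <= m)%N -> (forall i, (n <= i)%N -> F i = idx) ->
  \big[op/idx]_(i < n) F i = \big[op/idx]_(i < m) F i.
Proof.
move=> le_nm F_idx; rewrite (big_ord_widen m F le_nm) big_mkcond /=.
by apply: eq_bigr => i _; case: ltnP => // /F_idx ->.
Qed.

Section Partitions.
Variables r k : nat.

(* [m] is the exponent vector of a monomial in [c_1, ..., c_{r+1}]; the
   multiplicity of the part [i+1] in the corresponding partition is [m_i]. *)
Definition mnm_mult (m : 'X_{1..r.+1}) (i : nat) : nat :=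
  if (i < r.+1)%N then m (inord i) else 0%N.

Definition mpartition_of_mnm (m : 'X_{1..r.+1}) : mpartition k :=
  [ffun j : 'I_k => inord (mnm_mult m j)].

Lemma mnmwgtE m : mnmwgt m = (\sum_(i < r.+1) i.+1 * mnm_mult m i)%N.
Proof.
by apply: eq_bigr => i _; rewrite /mnm_mult ltn_ord inord_val mulnC.
Qed.

Lemma mnm_mult_le m i : mnmwgt m = k -> (i.+1 * mnm_mult m i <= k)%N.
Proof.
rewrite mnmwgtE => <-; case lt_ir: (i < r.+1)%N; last by rewrite /mnm_mult lt_ir muln0.
by rewrite (bigD1 (Ordinal lt_ir)) //= leq_addr.
Qed.

Lemma mnm_mult_eq0 m i : mnmwgt m = k -> (k <= i)%N -> mnm_mult m i = 0%N.
Proof. by move=> wm le_ki; have := mnm_mult_le i wm; nia. Qed.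

Lemma mpartition_of_mnmE m (j : 'I_k) :
  mnmwgt m = k -> (mpartition_of_mnm m j : nat) = mnm_mult m j.
Proof.
move=> wm; rewrite ffunE inordK // ltnS.
by apply: leq_trans (mnm_mult_le j wm); apply: leq_pmull.
Qed.

Lemma big_mnm_mult (R : Type) (idx : R) (op : Monoid.com_law idx)
    (G : nat -> nat -> R) m : mnmwgt m = k -> (forall i, G i 0%N = idx) ->
  \big[op/idx]_(i < k) G i (mnm_mult m i) = \big[op/idx]_(i < r.+1) G i (m i).
Proof.
move=> wm G0; pose H i := G i (mnm_mult m i).
rewrite (@big_ord_widen_idx _ _ _ H k (r.+1 + k) (leq_addl _ _)) => [|i le_ki]; last first.
  by rewrite /H mnm_mult_eq0.
rewrite [RHS](eq_bigr (fun i : 'I_r.+1 => H i)) => [|i _]; last first.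
  by rewrite /H /mnm_mult ltn_ord inord_val.
rewrite [RHS](@big_ord_widen_idx _ _ _ H r.+1 (r.+1 + k) (leq_addr _ _)) // => i le_ri.
by rewrite /H /mnm_mult ltnNge le_ri.
Qed.

Lemma mpartition_of_mnmP m : mnmwgt m = k -> is_partition (mpartition_of_mnm m).
Proof.
move=> wm; apply/eqP; under eq_bigr => i _ do rewrite mpartition_of_mnmE //.
rewrite (big_mnm_mult (G := fun i x => (i.+1 * x)%N) _ wm) => [|i]; last by rewrite muln0.
by rewrite -[RHS]wm; apply: eq_bigr => i _; rewrite mulnC.
Qed.

Lemma chern_lambda_mpartition_of_mnm m : mnmwgt m = k ->
  chern_lambda r.+1 (mpartition_of_mnm m) =
  'X_[m] \mPo [tuple mesym r.+1 rat i.+1 | i < r.+1].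
Proof.
move=> wm; rewrite comp_mpolyX /chern_lambda.
under eq_bigr => i _ do rewrite mpartition_of_mnmE //.
rewrite (big_mnm_mult (G := fun i x => chernE r.+1 i.+1 ^+ x) _ wm) => [|i]; last first.
  by rewrite expr0.
by apply: eq_bigr => i _; rewrite tnth_mktuple.
Qed.

End Partitions.

Lemma symmetric_homog_chern_lambda r k (v : {mpoly rat[r.+1]}) :
  v \is symmetric -> v \is k.-homog -> exists cf : mpartition k -> rat,
    v = \sum_(a | is_partition a) cf a *: chern_lambda r.+1 a.
Proof.
move=> v_sym v_homog; have [t [tS t_homog]] := sym_fundamental_homog v_sym v_homog.
have wt : {in msupp t, forall m, mnmwgt m = k} by apply/dhomogP.
exists (fun a => \sum_(m <- msupp t | (mnmwgt m == k) && (mpartition_of_mnm k m == a)) t@_m).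
rewrite -tS comp_mpolyEX.
set S := [tuple _ | i < r.+1].
have -> : \sum_(m <- msupp t) t@_m *: ('X_[m] \mPo S) =
    \sum_(m <- msupp t | mnmwgt m == k) t@_m *: chern_lambda r.+1 (mpartition_of_mnm k m).
  rewrite big_seq [RHS]big_seq_cond; apply: eq_big => [m|m m_t].
    by case: (boolP (m \in msupp t)) => //= /wt ->; rewrite eqxx.
  by rewrite chern_lambda_mpartition_of_mnm // wt.
rewrite (partition_big (mpartition_of_mnm k) (fun a => is_partition a)) => [|m /eqP];
  last exact: mpartition_of_mnmP.
by apply: eq_bigr => a _; rewrite scaler_suml; apply: eq_bigr => m /andP [_ /eqP ->].
Qed.

Lemma segre_symd_chern_expansion r k : exists p : mpartition k -> {poly rat},
  (forall a, (size (p a) <= (r.+1 * k).+1)%N) /\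
  (forall d, segre (chern_symd r.+1 d) k
       = \sum_(a : mpartition k | is_partition a) (p a).[d%:R] *: chern_lambda r.+1 a).
Proof.
have [P sP segreP] := polyfun_segre_symd r k.
have coef_expansion (j : 'I_(r.+1 * k).+1) : exists cf : mpartition k -> rat,
    P`_j = \sum_(a | is_partition a) cf a *: chern_lambda r.+1 a.
  apply: symmetric_homog_chern_lambda.
    apply/issymP => s; apply: (coef_fixed_additive (@natr_mpoly_inj r.+1) (f := msym s)) => d.
    by rewrite -segreP; apply: msym_segre_symd.
  rewrite homog_piE; apply/eqP.
  apply: (coef_fixed_additive (@natr_mpoly_inj r.+1) (f := pihomog mdeg k)) => d.
  by rewrite -segreP; apply: pihomog_dE; apply: segre_symd_homog.
have [cf cfP] := fin_all_exists coef_expansion.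
exists (fun a => \poly_(j < (r.+1 * k).+1) cf (inord j) a).
split=> [a|d]; first exact: size_poly.
rewrite segreP (horner_coef_wide _ sP).
under [RHS]eq_bigr => a _ do rewrite (horner_coef_wide _ (size_poly _ _)) scaler_suml.
rewrite exchange_big /=; apply: eq_bigr => j _; rewrite cfP mulr_suml.
apply: eq_bigr => a _.
by rewrite coef_poly ltn_ord inord_val -!natrX mulr_natr scalerMnl mulr_natr.
Qed.

Section Growth.
Variable F : realFieldType.

Lemma sum_powers_lb n d :
  (d%:R : F) ^+ n.+1 <= n.+1%:R * \sum_(j < d.+1) (j%:R : F) ^+ n.
Proof.
elim: d => [|d IH]; first by rewrite expr0n big_ord1 mulr_ge0 ?exprn_ge0.
rewrite big_ord_recr /= mulrDr.
suff : (d.+1%:R : F) ^+ n.+1 - d%:R ^+ n.+1 <= n.+1%:R * d.+1%:R ^+ n by lra.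
rewrite subrXX /= -natrB // subSnn mul1r.
have -> : n.+1%:R * d.+1%:R ^+ n = \sum_(i < n.+1) (d.+1%:R : F) ^+ n.
  by rewrite sumr_const card_ord mulr_natl.
apply: ler_sum => i _.
have le_in : (i <= n)%N by rewrite -ltnS.
apply: (@le_trans _ _ (d.+1%:R ^+ (n - i) * d.+1%:R ^+ i)); last by rewrite -exprD subnK.
by rewrite ler_wpM2l ?exprn_ge0 // lerXn2r ?nnegrE // ler_nat.
Qed.

Definition weight_first (i j : nat) : F := if i == 0%N then j%:R else 1.

Lemma multiconv_weight_first_lb r :
  exists2 c : F, 0 < c & forall d, c * d%:R ^+ r.+1 <= multiconv r.+1 weight_first d.
Proof.
elim: r => [|r [c c_gt0 IH]]; first by exists 1 => // d; rewrite multiconv1 mul1r.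
exists (c / r.+2%:R) => [|d]; first exact: divr_gt0.
rewrite multiconvS.
under eq_bigr => j _ do rewrite /weight_first /= mulr1.
rewrite (sum_ord_rev (multiconv r.+1 weight_first)).
apply: (@le_trans _ _ (\sum_(j < d.+1) c * j%:R ^+ r.+1)); last exact: ler_sum.
rewrite -mulr_sumr mulrAC ler_pdivrMr // -mulrA ler_pM2l // mulrC.
exact: sum_powers_lb.
Qed.

Lemma signed_segre_lb (I : Type) (y : I -> F) (s : seq I) : (forall i, 0 <= y i) ->
  forall K, (\sum_(i <- s) y i) ^+ K <=
    K`!%:R * ((-1) ^+ K * segre (fun j => (chern_poly y s)`_j) K).
Proof.
move=> y_ge0 K; set c := fun j => (chern_poly y s)`_j.
pose t K := (-1) ^+ K * segre c K; pose p n := \sum_(i <- s) y i ^+ n.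
have p_ge0 n : 0 <= p n by apply: sumr_ge0 => i _; apply: exprn_ge0.
rewrite (_ : \sum_(i <- s) y i = p 1%N) -/(t K); last by apply: eq_bigr => i _; rewrite expr1.
elim/ltn_ind: K => -[|K] IH; first by rewrite /t segre0 expr0 !mul1r.
have t_ge0 m : (m <= K)%N -> 0 <= t m.
  move=> le_mK; have := le_trans (exprn_ge0 m (p_ge0 1%N)) (IH m le_mK).
  by rewrite pmulr_rge0 // ltr0n fact_gt0.
(* Newton's identity, with the signs absorbed in [t], has only nonnegative terms. *)
have tS : K.+1%:R * t K.+1 = \sum_(j < K.+1) p j.+1 * t (K.+1 - j.+1)%N.
  rewrite /t mulrCA newton_segre mulrN mulr_sumr -sumrN; apply: eq_bigr => j _.
  rewrite -{1}(subnK (ltn_ord j)) exprD exprS -/(p j.+1).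
  transitivity ((-1) ^+ (K.+1 - j.+1) * ((-1) ^+ j) ^+ 2 * p j.+1 * segre c (K.+1 - j.+1)).
    by rewrite expr2; ring.
  by rewrite sqrr_sign; ring.
have tK : p 1%N * t K <= K.+1%:R * t K.+1.
  rewrite tS big_ord_recl /= subSS subn0 lerDl; apply: sumr_ge0 => j _.
  by rewrite mulr_ge0 ?t_ge0 // subSS leq_subr.
rewrite exprS factS natrM -mulrA.
apply: le_trans (ler_wpM2l (p_ge0 1%N) (IH K (ltnSn K))) _.
by rewrite mulrCA [X in _ <= X]mulrCA; apply: ler_wpM2l.
Qed.

End Growth.

Section DominatedPolynomials.
Variable F : archiRealFieldType.

Lemma horner_nat_le (Q : {poly F}) N d : (size Q <= N.+1)%N -> (0 < d)%N ->
  Q.[d%:R] <= (\sum_(i < N.+1) `|Q`_i|) * d%:R ^+ N.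
Proof.
move=> sQ d_gt0; rewrite (horner_coef_wide _ sQ) mulr_suml; apply: ler_sum => i _.
apply: le_trans (ler_norm _) _; rewrite normrM normrX normr_nat.
apply: ler_wpM2l; first exact: normr_ge0.
apply: (@le_trans _ _ (d%:R ^+ (N - i) * d%:R ^+ i)); last by rewrite -exprD subnK // -ltnS.
by apply: ler_peMl; rewrite ?exprn_ge0 ?exprn_ege1 ?ler1n.
Qed.

Lemma size_poly_dominating (Q : {poly F}) N (C : F) : 0 < C -> (size Q <= N.+1)%N ->
  (forall d, C * d%:R ^+ N <= Q.[d%:R]) -> size Q = N.+1.
Proof.
move=> C_gt0 sQ Q_ge; apply/eqP; rewrite eqn_leq sQ ltnNge; apply/negP => sQN.
case: N sQ Q_ge sQN => [|N] _ Q_ge sQN.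
  move: sQN; rewrite leqn0 size_poly_eq0 => /eqP Q0.
  by have := Q_ge 0%N; rewrite Q0 horner0 expr0 mulr1 leNgt C_gt0.
set M := \sum_(i < N.+1) `|Q`_i|.
have CM d : (0 < d)%N -> C * d%:R <= M.
  move=> d_gt0; rewrite -(@ler_pM2r _ (d%:R ^+ N)) ?exprn_gt0 ?ltr0n //.
  by rewrite -mulrA -exprS (le_trans (Q_ge d)) // horner_nat_le.
have M_ge0 : 0 <= M / C by rewrite divr_ge0 ?sumr_ge0 ?ltW.
have := CM (Num.Def.archi_bound (M / C)).+1 isT; rewrite leNgt => /negP; apply.
by rewrite mulrC -ltr_pdivrMr // (lt_trans (archi_boundP M_ge0)) // ltr_nat.
Qed.

End DominatedPolynomials.

Definition ones_mpartition k : mpartition k :=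
  [ffun j : 'I_k => if (j : nat) == 0%N then inord k else ord0].

Lemma ones_mpartitionE k (j : 'I_k) :
  (ones_mpartition k j : nat) = if (j : nat) == 0%N then k else 0%N.
Proof. by rewrite ffunE; case: eqP => // _; rewrite inordK. Qed.

Lemma ones_mpartitionP k : is_partition (ones_mpartition k).
Proof.
case: k => [|k]; first by rewrite /is_partition big_ord0.
rewrite /is_partition big_ord_recl ones_mpartitionE /= mul1n big1 ?addn0 //.
by move=> i _; rewrite ones_mpartitionE muln0.
Qed.

Lemma parts_le_ones r k : parts_le r.+1 (ones_mpartition k).
Proof.
apply/forallP => i; apply/implyP => lt_ri.
have i_neq0 : (i : nat) != 0%N by lia.
by rewrite ones_mpartitionE (negbTE i_neq0).
Qed.

Lemma ones_mpartition_eq k (a : mpartition k) : is_partition a ->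
  (forall j : 'I_k, (j : nat) != 0%N -> (a j : nat) = 0%N) -> a = ones_mpartition k.
Proof.
move=> /eqP a_part a_eq0; apply/ffunP => j; apply: val_inj => /=.
rewrite ones_mpartitionE; case: eqP => [j0|/eqP]; last exact: a_eq0.
rewrite -[RHS]a_part (bigD1 j) //= j0 mul1n big1 ?addn0 // => i i_neq_j.
rewrite a_eq0 ?muln0 //; apply: contra i_neq_j => /eqP i0.
by apply/eqP/val_inj; rewrite /= i0 j0.
Qed.

Section FirstUnitEvaluation.
Variable r : nat.

Definition first_unit : 'I_r.+1 -> rat := fun i => (i == ord0)%:R.

Lemma meval_chernE j : meval first_unit (chernE r.+1 j.+1) = (j == 0%N)%:R.
Proof.
case: j => [|j].
  rewrite /chernE mesym1E rmorph_sum (bigD1 ord0) //= big1 ?addr0 => [|i i_neq0].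
    by rewrite mevalXU /first_unit eqxx.
  by rewrite mevalXU /first_unit (negbTE i_neq0).
rewrite /chernE /mesym rmorph_sum big1 //= => h /eqP card_h.
have [x /setD1P [x_neq0 x_h]] : exists x, x \in h :\ ord0.
  apply/set0Pn; rewrite -card_gt0; have := cardsD1 ord0 h; rewrite card_h.
  by move: #|h :\ ord0| => n; case: (ord0 \in h) => /=; lia.
by rewrite rmorph_prod (bigD1 x) //= mevalXU /first_unit (negbTE x_neq0) mul0r.
Qed.

Lemma meval_chern_lambda k (a : mpartition k) : is_partition a ->
  meval first_unit (chern_lambda r.+1 a) = (a == ones_mpartition k)%:R.
Proof.
move=> a_part; rewrite /chern_lambda rmorph_prod.
under eq_bigr => j _ do rewrite rmorphXn /= meval_chernE.
have [->|a_neq] := eqVneq a (ones_mpartition k).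
  by apply: big1 => j _; rewrite ones_mpartitionE; case: eqP; rewrite ?expr1n ?expr0.
case: (pickP [pred j : 'I_k | ((j : nat) != 0%N) && ((a j : nat) != 0%N)]).
  move=> j /andP [j_neq0 aj_neq0].
  by rewrite (bigD1 j) //= (negbTE j_neq0) expr0n (negbTE aj_neq0) mul0r.
move=> a_eq0; case/eqP: a_neq; apply: ones_mpartition_eq => // j j_neq0.
by apply/eqP; move: (a_eq0 j) => /= /negbT; rewrite negb_and j_neq0 negbK.
Qed.

Lemma meval_chern_expansion k (p : mpartition k -> {poly rat}) d :
  meval first_unit (\sum_(a | is_partition a) (p a).[d%:R] *: chern_lambda r.+1 a) =
  (p (ones_mpartition k)).[d%:R].
Proof.
rewrite rmorph_sum (bigD1 (ones_mpartition k)) ?ones_mpartitionP //= big1 ?addr0.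
  by rewrite mevalZ meval_chern_lambda ?ones_mpartitionP // eqxx mulr1.
by move=> a /andP [a_part a_neq]; rewrite mevalZ meval_chern_lambda // (negbTE a_neq) mulr0.
Qed.

Lemma meval_chern_symd d j : meval first_unit (chern_symd r.+1 d j) =
  (chern_poly (fun m : {ffun 'I_r.+1 -> 'I_d.+1} => (m ord0 : nat)%:R)
     (enum (symd_index r.+1 d)))`_j.
Proof.
rewrite chern_symdE -coef_map /chern_poly rmorph_prod /=.
apply: (congr1 (fun p : {poly rat} => p`_j)); apply: eq_bigr => m _.
rewrite rmorphD rmorph1 rmorphM /= map_polyC map_polyX /=; congr (_ + _%:P * _).
rewrite /symd_root rmorph_sum (bigD1 ord0) //= big1 ?addr0 => [|i i_neq0].
  by rewrite mevalZ mevalXU /first_unit eqxx mulr1.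
by rewrite mevalZ mevalXU /first_unit (negbTE i_neq0) mulr0.
Qed.

Lemma sum_first_coord_symd d :
  \sum_(m <- enum (symd_index r.+1 d)) ((m ord0 : nat)%:R : rat) =
  multiconv r.+1 (@weight_first rat) d.
Proof.
rewrite big_enum -multiconvE; apply: eq_bigr => m _.
by rewrite big_ord_recl /weight_first /= big1 ?mulr1.
Qed.

End FirstUnitEvaluation.

Lemma size_ones_coef r k (p : mpartition k -> {poly rat}) :
  (forall a, (size (p a) <= (r.+1 * k).+1)%N) ->
  (forall d, segre (chern_symd r.+1 d) k
       = \sum_(a : mpartition k | is_partition a) (p a).[d%:R] *: chern_lambda r.+1 a) ->
  size (p (ones_mpartition k)) = (r.+1 * k).+1.
Proof.
move=> size_p segreP; have [c c_gt0 c_lb] := multiconv_weight_first_lb rat r.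
rewrite -(@size_scale _ ((-1) ^+ k)) ?signr_eq0 //.
apply: (@size_poly_dominating _ _ _ (c ^+ k / k`!%:R)).
- by rewrite divr_gt0 ?exprn_gt0 ?ltr0n ?fact_gt0.
- by rewrite size_scale ?signr_eq0 ?size_p.
move=> d; rewrite hornerZ -(meval_chern_expansion r) -segreP rmorph_segre.
rewrite (eq_segre (meval_chern_symd r d)).
have := @signed_segre_lb rat _ _ (enum (symd_index r.+1 d)) (fun m => ler0n _ (m ord0)) k.
rewrite sum_first_coord_symd => lb.
rewrite mulrAC ler_pdivrMr ?ltr0n ?fact_gt0 // [X in _ <= X]mulrC (le_trans _ lb) //.
have cd_ge0 : 0 <= c * d%:R ^+ r.+1 := mulr_ge0 (ltW c_gt0) (exprn_ge0 _ (ler0n _ _)).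
rewrite exprM -exprMn; apply: lerXn2r; rewrite ?nnegrE //.
exact: le_trans cd_ge0 (c_lb d).
Qed.

Theorem lemma3p2 (r k : nat) (hr : (0 < r)%N) :
  exists p : mpartition k -> {poly rat},
    (forall a : mpartition k, is_partition a -> (size (p a) <= (r * k).+1)%N) /\
    (exists a : mpartition k, [/\ is_partition a, parts_le r a & size (p a) = (r * k).+1]) /\
    (forall d : nat,
       segre (chern_symd r d) k
       = \sum_(a : mpartition k | is_partition a) (p a).[d%:R] *: chern_lambda r a).
Proof.
case: r hr => [//|r] _.
have [p [size_p segreP]] := segre_symd_chern_expansion r k.
exists p; split=> [a _|]; first exact: size_p.
split; last exact: segreP.
exists (ones_mpartition k); split.
- exact: ones_mpartitionP.
- exact: parts_le_ones.
- exact: size_ones_coef.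
Qed.
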